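(* Let $\sigma=\{\lambda_1,\ldots,\lambda_n\}$ be a set of $n$ distinct real numbers and let $\mathcal{F}$ be a finite set of real numbers. Then for any connected graph $G$ on $n\geq 2$ vertices there exists a matrix $A\in\mathcal{S}(G)$ with the strong spectral property such that $\operatorname{spec}(A)=\sigma$ and none of the diagonal entries of $A$ lies in $\mathcal{F}$.
   Context: For a simple graph $G$ on vertex set $\{1,\ldots,n\}$, $\mathcal{S}(G)$ is the set of all $n\times n$ real symmetric matrices $A=(a_{ij})$ such that for $i\neq j$, $a_{ij}\neq 0$ if and only if $\{i,j\}$ is an edge of $G$ (diagonal entries are unrestricted). A real symmetric matrix $A$ has the strong spectral property (SSP) if the only real symmetric matrix $X$ satisfying $A\circ X=O$, $I\circ X=O$ and $AX-XA=O$ is $X=O$, where $\circ$ is the entrywise product. $\operatorname{spec}(A)$ denotes the multiset of eigenvalues of $A$. *)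

From HB Require Import structures.
From mathcomp Require Import all_boot all_order all_algebra.
From mathcomp Require Import reals.
Set Implicit Arguments. Unset Strict Implicit. Unset Printing Implicit Defensive.
Import Order.TTheory GRing.Theory Num.Theory.
Local Open Scope ring_scope.

Definition simple_graph (n : nat) (e : rel 'I_n) : Prop :=
  (forall i j, e i j = e j i) /\ (forall i, e i i = false).

Definition connected_graph (n : nat) (e : rel 'I_n) : Prop :=
  forall i j, connect e i j.

Definition in_SG (R : realType) (n : nat) (e : rel 'I_n) (A : 'M[R]_n) : Prop :=
  A^T = A /\ (forall i j : 'I_n, i != j -> (A i j != 0) = e i j).

Definition SSP (R : realType) (n : nat) (A : 'M[R]_n) : Prop :=
  forall X : 'M[R]_n, X^T = X ->
    map2_mx *%R A X = 0 -> map2_mx *%R (1%:M : 'M[R]_n) X = 0 ->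
    A *m X - X *m A = 0 -> X = 0.

(* spec(A) = {lam_1,...,lam_n} as multisets: the characteristic polynomial
   (whose roots with multiplicity form spec(A)) is prod_i (X - lam_i). *)
Definition spec_eq (R : realType) (n : nat) (A : 'M[R]_n) (lam : 'I_n -> R) : Prop :=
  char_poly A = \prod_(i < n) ('X - (lam i)%:P).

(** The matrix is built as a perturbation of [diag lam] along the edges of
    [G].  For a symmetric [W] supported on the edges, a contraction argument
    gives a small zero-diagonal [X] and a diagonal [D] with
    [(D + W) (1 + X) = (1 + X) diag lam], so [A = D + W] has spectrum [lam].
    The diagonal of [A] stays close to the distinct [lam_i] while [W] is small,
    and this separation forces SSP: a zero-diagonal matrix commuting with [A]
    vanishes.  Finally [D_ii = lam_i - c_i(W) + O(|W|^3)] with the quadratic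
    term [c_i(W) = sum_k W_ik W_ki / (lam_i - lam_k)].  Taking [W = eps W0]
    with [W0_ik = t^(i+k)] on edges and [t] generic makes every [c_i(W0)]
    nonzero, so for small [eps] each [D_ii] differs from [lam_i] but is closer
    to it than any other point of [F]. *)

From HB Require Import structures.
From mathcomp Require Import all_boot all_order all_algebra.
From mathcomp Require Import reals.
From mathcomp Require Import all_classical all_reals all_analysis.
From mathcomp.algebra_tactics Require Import ring lra.
Import Order.TTheory GRing.Theory Num.Theory.
Import numFieldNormedType.Exports.
Set Implicit Arguments. Unset Strict Implicit. Unset Printing Implicit Defensive.
Local Open Scope classical_set_scope.
Local Open Scope ring_scope.

Section MatrixNorm.
Variable R : realType.

Lemma ler_mx_norm_entry m n (M : 'M[R]_(m, n)) i j : `|M i j| <= `|M|.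
Proof.
rewrite [leRHS]/Num.norm /= mx_normrE.
exact: (le_bigmax _ (fun ij : 'I_m * 'I_n => `|M ij.1 ij.2|) (i, j)).
Qed.

Lemma mx_norm_le m n (M : 'M[R]_(m, n)) c :
  0 <= c -> (forall i j, `|M i j| <= c) -> `|M| <= c.
Proof.
move=> c_ge0 M_le; rewrite [leLHS]/Num.norm /= mx_normrE.
by apply: bigmax_le => // -[i j] _; exact: M_le.
Qed.

Lemma mx_norm_mulmx m n p (A : 'M[R]_(m, n)) (B : 'M[R]_(n, p)) :
  `|A *m B| <= n%:R * (`|A| * `|B|).
Proof.
apply: mx_norm_le => [|i j]; first by rewrite !mulr_ge0.
rewrite mxE (le_trans (ler_norm_sum _ _ _)) //.
rewrite mulr_natl -[n in _ *+ n]card_ord -sumr_const ler_sum // => k _.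
by rewrite normrM ler_pM // ler_mx_norm_entry.
Qed.

Lemma ler_norm_mulmx_entry m n p (A : 'M[R]_(m, n)) (B : 'M[R]_(n, p)) i j :
  `|(A *m B) i j| <= n%:R * (`|A| * `|B|).
Proof. exact: le_trans (ler_mx_norm_entry _ i j) (mx_norm_mulmx A B). Qed.

Lemma unitmx_1D n (X : 'M[R]_n) : n%:R * `|X| < 1 -> 1%:M + X \in unitmx.
Proof.
move=> X_small; rewrite unitmxE unitfE; apply/det0P => -[v v_neq0].
rewrite mulmxDr mulmx1 => /eqP; rewrite addr_eq0 => /eqP v_eq.
have : `|v| <= n%:R * (`|v| * `|X|) by rewrite {1}v_eq normrN mx_norm_mulmx.
by rewrite mulrCA ler_pMr ?normr_gt0 // leNgt X_small.
Qed.

End MatrixNorm.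

Lemma char_poly_similar (F : fieldType) n (A V D : 'M[F]_n) :
  V \in unitmx -> A *m V = V *m D -> char_poly A = char_poly D.
Proof.
move=> V_unit AV_VD.
have : char_poly_mx A *m map_mx polyC V = map_mx polyC V *m char_poly_mx D.
  by rewrite /char_poly_mx mulmxBl mulmxBr -!map_mxM AV_VD scalar_mxC.
move/(congr1 determinant); rewrite !det_mulmx det_map_mx [RHS]mulrC.
by apply: mulIf; rewrite polyC_eq0 -unitfE -unitmxE.
Qed.

Lemma contraction_fixpoint_in_ball (R : realType) (V : completeNormedModType R)
    (f : V -> V) (r q : R) : 0 <= r -> 0 <= q -> q < 1 ->
  (forall x, `|x| <= r -> `|f x| <= r) ->
  (forall x y, `|x| <= r -> `|y| <= r -> `|f x - f y| <= q * `|x - y|) ->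
  exists2 x, `|x| <= r & x = f x.
Proof.
move=> r_ge0 q_ge0 q_lt1 f_ball f_lip.
pose B := closed_ball_ Num.norm (0 : V) r.
have inB x : B x = (`|x| <= r) by rewrite /B /closed_ball_ /= sub0r normrN.
have fB : {homo f : x / B x} by move=> x; rewrite !inB; exact: f_ball.
have f_ctr : is_contraction (mkfun fB).
  by exists (NngNum q_ge0); split => // -[x y] /= []; rewrite !inB; exact: f_lip.
have B_closed : closed B by exact: closed_closed_ball_.
have [|x Bx fx] := banach_fixed_point f_ctr B_closed.
  by exists 0; rewrite inB normr0.
by exists x; rewrite -?inB.
Qed.

(* ['M[R]_(m, n)] has normed-module and complete instances but not their join,
   which [banach_fixed_point] requires. *)
Definition complete_mx (R : realType) m n := 'M[R]_(m, n).
HB.instance Definition _ (R : realType) m n := NormedModule.copy (complete_mx R m n) 'M[R]_(m, n).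
HB.instance Definition _ (R : realType) m n := Complete.copy (complete_mx R m n) 'M[R]_(m, n).

Lemma SSP_diag_mxD (R : realType) n (d : 'rV[R]_n) (W : 'M[R]_n) (delta : R) :
  (forall i j : 'I_n, i != j -> delta <= `|d 0 i - d 0 j|) -> 2 * n%:R * `|W| < delta ->
  SSP (diag_mx d + W).
Proof.
move=> d_sep W_small Y _ _ /matrixP Y_diag /matrixP comm.
have delta_gt0 : 0 < delta by apply: le_lt_trans W_small; rewrite !mulr_ge0.
have comm_bound : `|Y *m W - W *m Y| <= 2 * n%:R * `|W| * `|Y|.
  apply: le_trans (ler_normB _ _) _.
  by have := mx_norm_mulmx Y W; have := mx_norm_mulmx W Y; lra.
have c_ge0 : 0 <= 2 * n%:R * `|W| * `|Y| / delta.
  by rewrite divr_ge0 ?mulr_ge0 // ltW.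
have : `|Y| <= 2 * n%:R * `|W| * `|Y| / delta.
  apply: mx_norm_le => // i j.
  have [<-|ij] := eqVneq i j.
    move: (Y_diag i i); rewrite !mxE eqxx mulr1n mul1r => ->.
    by rewrite normr0.
  have : (d 0 i - d 0 j) * Y i j = (Y *m W - W *m Y) i j.
    move: (comm i j); rewrite !(mulmxDl, mulmxDr) mul_diag_mx mul_mx_diag !mxE.
    by move=> h; rewrite mulrBl; lra.
  move=> /(congr1 Num.norm); rewrite normrM => e.
  rewrite ler_pdivlMr // mulrC.
  apply: le_trans (ler_wpM2r (normr_ge0 _) (d_sep _ _ ij)) _.
  by rewrite e (le_trans (ler_mx_norm_entry _ i j)).
move=> Y_le; apply/eqP; apply: contraTT Y_le => Y_neq0.
by rewrite ler_pdivlMr // mulrC ler_pM2r ?normr_gt0 // -ltNge.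
Qed.

Lemma ler_norm_divr (R : numFieldType) (x y c g : R) :
  0 < g -> g <= `|y| -> `|x| <= c -> `|x / y| <= c / g.
Proof.
move=> g_gt0 g_le x_le; have y_gt0 := lt_le_trans g_gt0 g_le.
by rewrite normrM normfV ler_pM ?invr_ge0 // lef_pV2.
Qed.

Lemma ler_normB_mul (R : numDomainType) (a b x : R) :
  `|a - b * x| <= `|a| + `|b| * `|x|.
Proof. by rewrite -normrM ler_normB. Qed.

Section IsospectralPerturbation.
Variables (R : realType) (n : nat) (lam : 'I_n -> R) (W : 'M[R]_n) (g w : R).
Hypothesis n_gt0 : (0 < n)%N.
Hypothesis g_gt0 : 0 < g.
Hypothesis lam_gap : forall i j : 'I_n, i != j -> g <= `|lam i - lam j|.
Hypothesis W_diag : forall i, W i i = 0.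
Hypothesis W_le : `|W| <= w.
Hypothesis w_small : 8 * n%:R * w <= g.

(* A fixed point [X] is the off-diagonal part of the eigenvector matrix
   [1 + X]: [(diag_mx d + W) *m (1 + X) = (1 + X) *m diag_mx lam] with
   [d_i = lam_i - (W X)_ii], see [diag_perturbation_eigvec]. *)
Definition eigvec_map (X : 'M[R]_n) : 'M[R]_n :=
  \matrix_(i, j) if i == j then 0
                 else (W i j + (W *m X) i j - (W *m X) i i * X i j) / (lam j - lam i).

(* The quadratic part of [(W X)_ii], i.e. of [lam_i - d_i]. *)
Definition second_order_shift i :=
  \sum_(k | k != i) W i k * W k i / (lam i - lam k).

Lemma eigvec_map_diag X i : eigvec_map X i i = 0.
Proof. by rewrite mxE eqxx. Qed.

Lemma eigvec_map_offdiag X i j : i != j ->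
  eigvec_map X i j = (W i j + (W *m X) i j - (W *m X) i i * X i j) / (lam j - lam i).
Proof. by rewrite mxE => /negbTE ->. Qed.

Let r := 2 * w / g.

Let w_ge0 : 0 <= w. Proof. exact: le_trans (normr_ge0 W) W_le. Qed.
Let n_ge1 : 1 <= n%:R :> R. Proof. by rewrite ler1n. Qed.
Let r_ge0 : 0 <= r. Proof. by rewrite divr_ge0 ?mulr_ge0 // ltW. Qed.
Let nr_le : n%:R * r <= 1 / 4.
Proof. rewrite /r mulrA ler_pdivrMr //. have := w_small; lra. Qed.
Let r_le : r <= 1 / 4.
Proof. by apply: le_trans nr_le; rewrite ler_peMl. Qed.

Let nw_le : n%:R * w <= g / 8.
Proof. by have := w_small; lra. Qed.
Let rg : r * g = 2 * w. Proof. by rewrite /r divfK // gt_eqF. Qed.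
Let nwr_le : n%:R * w * r <= w / 4.
Proof. by rewrite mulrAC; have := ler_wpM2r w_ge0 nr_le; lra. Qed.

Let WA_entry (A : 'M[R]_n) i j : `|(W *m A) i j| <= n%:R * w * `|A|.
Proof.
apply: le_trans (ler_norm_mulmx_entry _ _ i j) _.
by rewrite -mulrA ler_wpM2l // ler_wpM2r.
Qed.

Let WX_entry (X : 'M[R]_n) i j : `|X| <= r -> `|(W *m X) i j| <= w / 4.
Proof.
move=> X_le; apply: le_trans (WA_entry X i j) (le_trans _ nwr_le).
by rewrite ler_wpM2l // mulr_ge0.
Qed.

Lemma eigvec_map_ball (X : 'M[R]_n) : `|X| <= r -> `|eigvec_map X| <= r.
Proof.
move=> X_le; apply: mx_norm_le => // i j.
have [<-|ij] := eqVneq i j; first by rewrite eigvec_map_diag normr0.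
rewrite eigvec_map_offdiag //.
rewrite -(mulfK (lt0r_neq0 g_gt0) r) rg.
apply: ler_norm_divr; [exact: g_gt0 | by apply: lam_gap; rewrite eq_sym |].
apply: le_trans (ler_normB_mul _ _ _) _.
have := ler_normD (W i j) ((W *m X) i j).
have := ler_pM (normr_ge0 _) (normr_ge0 _) (WX_entry i i X_le)
  (le_trans (ler_mx_norm_entry _ i j) (le_trans X_le r_le)).
have := le_trans (ler_mx_norm_entry _ i j) W_le.
have := WX_entry i j X_le; have := w_ge0; lra.
Qed.

Lemma eigvec_map_lipschitz (X Y : 'M[R]_n) : `|X| <= r -> `|Y| <= r ->
  `|eigvec_map X - eigvec_map Y| <= 2^-1 * `|X - Y|.
Proof.
move=> X_le Y_le; apply: mx_norm_le => [|i j]; first by rewrite mulr_ge0.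
have -> : (eigvec_map X - eigvec_map Y) i j = eigvec_map X i j - eigvec_map Y i j.
  by rewrite !mxE.
have [<-|ij] := eqVneq i j; first by rewrite !eigvec_map_diag subrr normr0 mulr_ge0.
rewrite !eigvec_map_offdiag //.
rewrite -mulrBl -(mulfK (lt0r_neq0 g_gt0) (2^-1 * _)).
apply: ler_norm_divr; [exact: g_gt0 | by apply: lam_gap; rewrite eq_sym |].
have -> : W i j + (W *m X) i j - (W *m X) i i * X i j
          - (W i j + (W *m Y) i j - (W *m Y) i i * Y i j)
    = (W *m (X - Y)) i j - (W *m X) i i * (X - Y) i j - (W *m (X - Y)) i i * Y i j.
  by rewrite mulmxBr !mxE; ring.
apply: le_trans (ler_normB_mul _ _ _) _.
have := ler_normB_mul ((W *m (X - Y)) i j) ((W *m X) i i) ((X - Y) i j).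
have := ler_pM (normr_ge0 _) (normr_ge0 _) (WX_entry i i X_le) (ler_mx_norm_entry (X - Y) i j).
have := ler_pM (normr_ge0 _) (normr_ge0 _) (WA_entry (X - Y) i i)
  (le_trans (ler_mx_norm_entry _ i j) (le_trans Y_le r_le)).
have := WA_entry (X - Y) i j.
have := ler_wpM2r (normr_ge0 (X - Y)) nw_le.
have := ler_wpM2r (mulr_ge0 w_ge0 (normr_ge0 (X - Y))) n_ge1.
have := mulr_ge0 (ltW g_gt0) (normr_ge0 (X - Y)).
lra.
Qed.

Lemma eigvec_map_fixpoint : exists2 X, `|X| <= r & X = eigvec_map X.
Proof.
apply: (@contraction_fixpoint_in_ball R (complete_mx R n n) eigvec_map r 2^-1) => //.
- lra.
- by move=> X; apply: eigvec_map_ball.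
- by move=> X Y; apply: eigvec_map_lipschitz.
Qed.

Section FixedPoint.
Variable X : 'M[R]_n.
Hypothesis X_le : `|X| <= r.
Hypothesis X_fix : X = eigvec_map X.

Let d : 'rV[R]_n := \row_i (lam i - (W *m X) i i).

Let X_diag i : X i i = 0.
Proof. by rewrite X_fix eigvec_map_diag. Qed.

Let X_offdiag (i j : 'I_n) : i != j ->
  X i j * (lam j - lam i) = W i j + (W *m X) i j - (W *m X) i i * X i j.
Proof.
move=> ij; have lam_neq : lam j - lam i != 0.
  by rewrite -normr_gt0 (lt_le_trans g_gt0) // lam_gap // eq_sym.
by rewrite {1}X_fix eigvec_map_offdiag // divfK.
Qed.

Lemma diag_perturbation_eigvec :
  (diag_mx d + W) *m (1%:M + X) = (1%:M + X) *m diag_mx (\row_i lam i).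
Proof.
apply/matrixP => i j.
rewrite mulmxDr mulmx1 !mulmxDl mul1mx mul_diag_mx mul_mx_diag.
have [<-|ij] := eqVneq i j.
  by move: (X_diag i) (W_diag i); rewrite !mxE eqxx /= => -> ->; ring.
move: (X_offdiag ij); rewrite !mxE (negbTE ij) /= => h; lra.
Qed.

Let dE i : d 0 i = lam i - (W *m X) i i. Proof. by rewrite mxE. Qed.

Lemma diag_perturbation_spec : spec_eq (diag_mx d + W) lam.
Proof.
have V_unit : 1%:M + X \in unitmx.
  apply: unitmx_1D; apply: le_lt_trans (le_trans (ler_wpM2l _ X_le) nr_le) _ => //.
  lra.
rewrite /spec_eq (char_poly_similar V_unit diag_perturbation_eigvec).
rewrite char_poly_trig ?diag_mx_is_trig //.
by apply: eq_bigr => i _; rewrite !mxE eqxx.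
Qed.

Lemma diag_perturbation_SSP : SSP (diag_mx d + W).
Proof.
apply: (@SSP_diag_mxD _ _ _ _ (g - w / 2)) => [i j ij|].
  have e : lam i - lam j = (d 0 i - d 0 j) + ((W *m X) i i - (W *m X) j j).
    by rewrite !dE; ring.
  have := lam_gap ij; rewrite e => gap.
  have := ler_normD (d 0 i - d 0 j) ((W *m X) i i - (W *m X) j j).
  have := ler_normB ((W *m X) i i) ((W *m X) j j).
  have := WX_entry i i X_le; have := WX_entry j j X_le; lra.
have := ler_wpM2l (ler0n _ n) W_le.
have := ler_wpM2r w_ge0 n_ge1; have := nw_le; have := g_gt0; lra.
Qed.

Lemma diag_perturbation_near i : `|d 0 i - lam i| <= n%:R * w * r.
Proof.
rewrite dE addrAC subrr add0r normrN; apply: le_trans (WA_entry X i i) _.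
by rewrite ler_wpM2l // mulr_ge0.
Qed.

Lemma diag_perturbation_second_order i :
  `|d 0 i - lam i + second_order_shift i| <= n%:R * (w * (2 * n%:R * w * r / g)).
Proof.
have -> : d 0 i - lam i + second_order_shift i = second_order_shift i - (W *m X) i i.
  by rewrite dE; ring.
rewrite /second_order_shift big_mkcond mxE -sumrB /=.
apply: le_trans (ler_norm_sum _ _ _) _.
rewrite mulr_natl -[n in _ *+ n]card_ord -sumr_const ler_sum // => k _.
have [->|ki] := eqVneq k i.
  by rewrite /= W_diag mul0r subrr normr0 !mulr_ge0 ?invr_ge0 // ltW.
rewrite /= {1}X_fix eigvec_map_offdiag //.
set p := (W *m X) k i - (W *m X) k k * X k i.
have -> : W i k * W k i / (lam i - lam k) - W i k * ((W k i + (W *m X) k i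
    - (W *m X) k k * X k i) / (lam i - lam k)) = - (W i k * (p / (lam i - lam k))).
  by rewrite /p; ring.
rewrite normrN normrM ler_pM //.
  exact: le_trans (ler_mx_norm_entry _ i k) W_le.
apply: ler_norm_divr g_gt0 _ _; first by apply: lam_gap; rewrite eq_sym.
have WX_le j l : `|(W *m X) j l| <= n%:R * w * r.
  by apply: le_trans (WA_entry X j l) _; rewrite ler_wpM2l // mulr_ge0.
apply: le_trans (ler_normB_mul _ _ _) _.
have nwr_ge0 : 0 <= n%:R * w * r := mulr_ge0 (mulr_ge0 (ler0n _ _) w_ge0) r_ge0.
have := ler_pM (normr_ge0 _) (normr_ge0 _) (WX_le k k) (ler_mx_norm_entry X k i).
have := ler_wpM2l nwr_ge0 (le_trans X_le r_le).
have := WX_le k i; lra.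
Qed.

End FixedPoint.

Theorem isospectral_diag_perturbation : exists d : 'rV[R]_n,
  [/\ spec_eq (diag_mx d + W) lam, SSP (diag_mx d + W),
      forall i, `|d 0 i - lam i| <= 2 * n%:R * w ^+ 2 / g
    & forall i, `|d 0 i - lam i + second_order_shift i|
                  <= 4 * n%:R ^+ 2 * w ^+ 3 / g ^+ 2].
Proof.
have [X X_le X_fix] := eigvec_map_fixpoint.
exists (\row_i (lam i - (W *m X) i i)); split.
- exact: diag_perturbation_spec.
- exact: diag_perturbation_SSP.
- have -> : 2 * n%:R * w ^+ 2 / g = n%:R * w * r by rewrite /r; ring.
  exact: diag_perturbation_near.
- have -> : 4 * n%:R ^+ 2 * w ^+ 3 / g ^+ 2 = n%:R * (w * (2 * n%:R * w * r / g)).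
    by rewrite /r; field; exact: lt0r_neq0.
  exact: diag_perturbation_second_order.
Qed.

End IsospectralPerturbation.

Lemma exists_pos_lower_bound (R : realDomainType) (I : finType) (P : pred I)
    (a : I -> R) :
  (forall i, P i -> 0 < a i) -> exists2 e : R, 0 < e & forall i, P i -> e <= a i.
Proof.
move=> a_gt0; exists (\big[Num.min/1]_(i | P i) a i).
  by elim/big_ind: _ => // x y x_gt0 y_gt0; rewrite lt_min x_gt0.
by move=> i Pi; rewrite (bigD1 i) //= ge_min lexx.
Qed.

Lemma exists_injective_gap (R : realDomainType) n (lam : 'I_n -> R) : injective lam ->
  exists2 g : R, 0 < g & forall i j : 'I_n, i != j -> g <= `|lam i - lam j|.
Proof.
move=> lam_inj.
have [|g g_gt0 g_le] := @exists_pos_lower_bound _ _ (fun p : 'I_n * 'I_n => p.1 != p.2)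
    (fun p => `|lam p.1 - lam p.2|).
  by move=> [i j] /= ij; rewrite normr_gt0 subr_eq0 (inj_eq lam_inj).
by exists g => // i j; exact: (g_le (i, j)).
Qed.

Lemma exists_seq_gap (R : realType) n (x : 'I_n -> R) (F : seq R) :
  exists2 g : R, 0 < g & forall i f, f \in F -> f != x i -> g <= `|f - x i|.
Proof.
have [|g g_gt0 g_le] := @exists_pos_lower_bound _ _
    (fun p : 'I_n * seq_sub F => ssval p.2 != x p.1) (fun p => `|ssval p.2 - x p.1|).
  by move=> [i f] /= fx; rewrite normr_gt0 subr_eq0.
by exists g => // i f fF; exact: (g_le (i, SeqSub fF)).
Qed.

Lemma near0_mulr_exp_lt (R : realType) (C D : R) k :
  0 < D -> \forall x \near 0^'+, C * x ^+ k.+1 < D.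
Proof.
move=> D_gt0; apply: (@cvgr_lt _ _ _ _ _ 0) => //; apply: cvg_at_right_filter.
have : C * x ^+ k.+1 @[x --> 0] --> C * 0 ^+ k.+1.
  by apply: cvgMl_tmp; exact: exprn_continuous.
by rewrite expr0n mulr0.
Qed.

Lemma second_order_shiftZ (R : realType) n (lam : 'I_n -> R) (a : R) W i :
  second_order_shift lam (a *: W) i = a ^+ 2 * second_order_shift lam W i.
Proof.
rewrite /second_order_shift mulr_sumr; apply: eq_bigr => k _.
by rewrite !mxE; ring.
Qed.

Lemma notin_seq_near (R : realType) (F : seq R) (x y s E dl : R) :
  (forall f, f \in F -> f != x -> dl <= `|f - x|) ->
  `|y - x| < dl -> `|y - x + s| <= E -> E < `|s| -> y \notin F.
Proof.
move=> F_far y_near y_second E_lt; apply/negP => yF.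
have [y_eq|y_neq] := eqVneq y x.
  by move: y_second; rewrite y_eq subrr add0r; lra.
by have := F_far y yF y_neq; lra.
Qed.

Lemma exists_isospectral_diag_completion (R : realType) n (lam : 'I_n -> R)
    (F : seq R) (W : 'M[R]_n) :
  (0 < n)%N -> injective lam -> (forall i, W i i = 0) -> `|W| <= 1 ->
  (forall i, second_order_shift lam W i != 0) ->
  exists eps : R, exists d : 'rV[R]_n, [/\ 0 < eps,
    spec_eq (diag_mx d + eps *: W) lam, SSP (diag_mx d + eps *: W)
    & forall i, d 0 i \notin F].
Proof.
move=> n_gt0 lam_inj W_diag W_le1 shift_neq0.
have [g g_gt0 lam_gap] := exists_injective_gap lam_inj.
have [dl dl_gt0 F_far] := exists_seq_gap lam F.
have [|ka ka_gt0 ka_le] := @exists_pos_lower_bound _ _ predT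
    (fun i => `|second_order_shift lam W i|).
  by move=> i _; rewrite normr_gt0.
have [eps [eps_gt0 eps_gap eps_dl eps_ka]] : exists eps : R, [/\ 0 < eps,
    8 * n%:R * eps ^+ 1 < g, 2 * n%:R / g * eps ^+ 2 < dl
  & 4 * n%:R ^+ 2 / g ^+ 2 * eps ^+ 1 < ka].
  apply: (@filter_ex _ (0 : R)^'+); near=> eps; split; near: eps;
    [exact: nbhs_right_gt | exact: near0_mulr_exp_lt..].
have epsW_le : `|eps *: W| <= eps.
  by rewrite normrZ gtr0_norm // ler_piMr // ltW.
have [||d [A_spec A_SSP d_near d_second]] :=
  isospectral_diag_perturbation n_gt0 g_gt0 lam_gap _ epsW_le.
- by move=> i; rewrite mxE W_diag mulr0.
- by rewrite expr1 in eps_gap; exact: ltW.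
exists eps, d; split => // i.
apply: notin_seq_near (F_far i) _ (d_second i) _.
  by apply: le_lt_trans (d_near i) _; rewrite mulrAC.
rewrite second_order_shiftZ normrM normrX gtr0_norm //.
have -> : 4 * n%:R ^+ 2 * eps ^+ 3 / g ^+ 2
    = eps ^+ 2 * (4 * n%:R ^+ 2 / g ^+ 2 * eps ^+ 1) by ring.
by rewrite ltr_pM2l ?exprn_gt0 // (lt_le_trans eps_ka) ?ka_le.
Unshelve. all: by end_near.
Qed.

Lemma connected_neighbor n (e : rel 'I_n) :
  (1 < n)%N -> connected_graph e -> forall i, exists j, e i j.
Proof.
move=> n_gt1 e_conn i.
have [j ji] : exists j : 'I_n, j != i.
  have [->|i_neq] := eqVneq i (Ordinal n_gt1).
    by exists (Ordinal (ltnW n_gt1)).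
  by exists (Ordinal n_gt1); rewrite eq_sym.
case/connectP: (e_conn i j) => -[/= _ j_eq|k p /= /andP[eik _] _]; last by exists k.
by rewrite j_eq eqxx in ji.
Qed.

Lemma exists_nonroot_in01 (R : realType) (p : {poly R}) :
  p != 0 -> exists2 t : R, 0 < t <= 1 & ~~ root p t.
Proof.
move=> p_neq0; pose ts := [seq (m.+1%:R)^-1 : R | m <- iota 0 (size p)].
have ts_uniq : uniq ts.
  rewrite map_inj_uniq ?iota_uniq // => a b /invr_inj /eqP.
  by rewrite eqr_nat eqSS => /eqP.
have /allPn[_ /mapP[m _ ->] m_nonroot] : ~~ all (root p) ts.
  apply/negP => all_roots; have := max_poly_roots p_neq0 all_roots ts_uniq.
  by rewrite size_map size_iota ltnn.
by exists (m.+1%:R)^-1; rewrite ?invr_gt0 ?ltr0Sn ?invf_le1 ?ltr0Sn ?ler1n.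
Qed.

Section EdgeWeights.
Variables (R : realType) (n : nat) (lam : 'I_n -> R) (e : rel 'I_n).
Hypothesis e_sym : forall i j, e i j = e j i.
Hypothesis e_irr : forall i, e i i = false.

Definition edge_weight_mx (t : R) : 'M[R]_n :=
  \matrix_(i, k) if e i k then t ^+ (i + k) else 0.

Lemma edge_weight_mx_tr t : (edge_weight_mx t)^T = edge_weight_mx t.
Proof. by apply/matrixP => i k; rewrite !mxE e_sym addnC. Qed.

Lemma edge_weight_mx_diag t i : edge_weight_mx t i i = 0.
Proof. by rewrite mxE e_irr. Qed.

Lemma edge_weight_mx_neq0 t i k : 0 < t -> (edge_weight_mx t i k != 0) = e i k.
Proof. by move=> t_gt0; rewrite mxE; case: (e i k); rewrite ?eqxx // expf_neq0 ?gt_eqF. Qed.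

Lemma edge_weight_mx_norm t : 0 <= t <= 1 -> `|edge_weight_mx t| <= 1.
Proof.
move=> /andP[t_ge0 t_le1]; apply: mx_norm_le => // i k; rewrite mxE.
by case: (e i k); rewrite ?normr0 // ger0_norm ?exprn_ge0 ?exprn_ile1.
Qed.

Lemma in_SG_diag_mxD_edge_weight (d : 'rV[R]_n) (a t : R) : 0 < a -> 0 < t ->
  in_SG e (diag_mx d + a *: edge_weight_mx t).
Proof.
move=> a_gt0 t_gt0; split.
  by rewrite linearD /= tr_diag_mx linearZ /= edge_weight_mx_tr.
move=> i k ik.
have -> : (diag_mx d + a *: edge_weight_mx t) i k = a * edge_weight_mx t i k.
  by rewrite !mxE (negbTE ik) mulr0n add0r.
by rewrite mulf_eq0 negb_or gt_eqF //= edge_weight_mx_neq0.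
Qed.

(* The exponents [2 (i + k)] differ for different [k], so [shift_poly i] is
   nonzero as soon as [i] has a neighbour. *)
Definition shift_poly i : {poly R} :=
  \sum_(k | e i k) (lam i - lam k)^-1 *: 'X^(2 * (i + k)).

Lemma second_order_shift_edge_weight t i :
  second_order_shift lam (edge_weight_mx t) i = (shift_poly i).[t].
Proof.
rewrite /second_order_shift horner_sum big_mkcond [RHS]big_mkcond.
apply: eq_bigr => k _; rewrite !mxE (e_sym k i).
have [->|ki] := eqVneq k i; first by rewrite e_irr.
case: (e i k); last by rewrite /= !mul0r.
by rewrite /= hornerZ hornerXn mul2n -addnn !exprD; ring.
Qed.

Hypothesis lam_inj : injective lam.

Lemma shift_poly_neq0 i k : e i k -> shift_poly i != 0.
Proof.
move=> eik; apply/eqP => /(congr1 (fun p : {poly R} => p`_(2 * (i + k)))).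
rewrite coef0 coef_sum (bigD1 k) //= big1 => [|k' /andP[_ k'k]].
  rewrite coefZ coefXn eqxx mulr1 addr0 => /eqP.
  rewrite invr_eq0 subr_eq0 => /eqP/lam_inj ik.
  by rewrite ik e_irr in eik.
by rewrite coefZ coefXn eqn_mul2l /= eqn_add2l eq_sym val_eqE (negbTE k'k) mulr0.
Qed.

Lemma exists_generic_edge_weight : (forall i, exists k, e i k) ->
  exists2 t : R, 0 < t <= 1 & forall i, second_order_shift lam (edge_weight_mx t) i != 0.
Proof.
move=> e_nbr; have /exists_nonroot_in01[t t01] : \prod_i shift_poly i != 0.
  by apply/prodf_neq0 => i _; have [k eik] := e_nbr i; exact: shift_poly_neq0 eik.
rewrite /root horner_prod => /prodf_neq0 shift_neq0.
by exists t => // i; rewrite second_order_shift_edge_weight shift_neq0.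
Qed.

End EdgeWeights.

Theorem lemma2p3 (R : realType) (n : nat) (lam : 'I_n -> R) (F : seq R)
    (e : rel 'I_n) :
  (2 <= n)%N -> injective lam -> simple_graph e -> connected_graph e ->
  exists A : 'M[R]_n,
    [/\ in_SG e A, SSP A, spec_eq A lam & forall i : 'I_n, A i i \notin F].
Proof.
move=> n_gt1 lam_inj [e_sym e_irr] e_conn.
have [t /andP[t_gt0 t_le1] shift_neq0] :=
  exists_generic_edge_weight e_sym e_irr lam_inj (connected_neighbor n_gt1 e_conn).
have [||eps [d [eps_gt0 A_spec A_SSP d_notin]]] :=
  exists_isospectral_diag_completion F (ltnW n_gt1) lam_inj _ _ shift_neq0.
- exact: edge_weight_mx_diag.
- by apply: edge_weight_mx_norm; rewrite ltW.
exists (diag_mx d + eps *: edge_weight_mx e t); split => //.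
  exact: in_SG_diag_mxD_edge_weight.
by move=> i; rewrite !mxE eqxx mulr1n e_irr mulr0 addr0 d_notin.
Qed.
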